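(* Let $W$ be a complex vector space and $\phi(x,z)$ an associate of the additive formal group with $\phi(x,z)\ne x$. Then every compatible subset of $\mathcal{E}(W)$ is $\phi$-quasi compatible, and every quasi compatible subset of $\mathcal{E}(W)$ is $\phi$-quasi compatible.
   Context: $\mathcal{E}(W)=\mathrm{Hom}(W,W((x)))$. An associate is $\phi(x,z)\in\mathbb{C}((x))[[z]]$ with $\phi(x,0)=x$ and $\phi(\phi(x,x_2),x_0)=\phi(x,x_0+x_2)$; for $p\in\mathbb{C}[[x,y]]$, $p(\phi(x,z),x)\in\mathbb{C}((x))[[z]]$ is the substitution. A finite sequence $a_1(x),\dots,a_r(x)$ in $\mathcal{E}(W)$ is compatible if $\prod_{i<j}(x_i-x_j)^ka_1(x_1)\cdots a_r(x_r)\in\mathrm{Hom}(W,W((x_1,\dots,x_r)))$ for some $k\in\mathbb{N}$; quasi compatible if $\prod_{i<j}p(x_i,x_j)a_1(x_1)\cdots a_r(x_r)\in\mathrm{Hom}(W,W((x_1,\dots,x_r)))$ for some nonzero $p\in\mathbb{C}[[x,y]]$; $\phi$-quasi compatible if this holds for some $p$ with $p(\phi(x,z),x)\ne0$. A subset is (quasi, $\phi$-quasi) compatible if every finite sequence in it is. *)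

From mathcomp Require Import all_boot all_order all_algebra.
From mathcomp Require Import boolp classical_sets fsbigop reals.
From mathcomp Require Export complex.
Set Implicit Arguments. Unset Strict Implicit. Unset Printing Implicit Defensive.
Import GRing.Theory Num.Theory.
Local Open Scope ring_scope.
Local Open Scope classical_set_scope.

(* Infinite formal sums are written with the finitely-supported sum
   \sum_(i \in setT) F i of fsbigop; in every place they are used below the
   support is finite for the objects in question, so they are the honest
   (finite) coefficient formulas of products/substitutions of formal series. *)

(* Series in C((x))[[z]] : phi k m = coefficient of z^k x^m.           *)
Definition zser (K : fieldType) := nat -> int -> K.

Definition zmul (K : fieldType) (f g : zser K) : zser K :=
  fun k m => \sum_(i < k.+1) \sum_(l \in [set: int]) f i l * g (k - i)%N (m - l).

Definition zone (K : fieldType) : zser K := fun k m => ((k == 0%N) && (m == 0))%:R.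

Definition xser (K : fieldType) : zser K := fun k m => ((k == 0%N) && (m == 1))%:R.

Definition znpow (K : fieldType) (f : zser K) (j : nat) : zser K := iter j (zmul f) (zone K).

Definition binZ (K : fieldType) (n : int) (j : nat) : K :=
  (\prod_(i < j) (n%:~R - i%:R)) / (j`!)%:R.

(* Integer power phi(x,z)^n for phi with phi(x,0) = x, defined by the
   binomial expansion  phi^n = sum_j binom(n,j) x^(n-j) (phi - x)^j
   (only j <= k contributes to the coefficient of z^k).  *)
Definition zpow (K : fieldType) (phi : zser K) (n : int) : zser K :=
  fun k m => \sum_(j < k.+1)
     binZ K n j * znpow (fun k' m' => phi k' m' - xser K k' m') j k (m - n + j%:Z).

(* phi is an associate of the additive formal group:
   phi(x,z) in C((x))[[z]], phi(x,0) = x,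
   phi(phi(x,x2),x0) = phi(x,x0+x2) (coefficient of x0^a x2^b x^m). *)
Definition is_associate (K : fieldType) (phi : zser K) : Prop :=
  [/\ (forall k, exists N : int, forall m, m < N -> phi k m = 0),
      (forall m, phi 0%N m = (m == 1)%:R) &
      (forall (a b : nat) (m : int),
         \sum_(n \in [set: int]) phi a n * zpow phi n b m
         = 'C(a + b, a)%:R * phi (a + b)%N m)].

(* power series in C[[x,y]] : p i j = coefficient of x^i y^j *)
Definition pser (K : fieldType) := nat -> nat -> K.

(* the substitution p(phi(x,z), x) in C((x))[[z]] *)
Definition subst_phi (K : fieldType) (p : pser K) (phi : zser K) : zser K :=
  fun k m => \sum_(ij \in [set: nat * nat])
                p ij.1 ij.2 * zpow phi (Posz ij.1) k (m - Posz ij.2).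

Definition xmy_pow (K : fieldType) (k : nat) : pser K :=
  fun i j => if (i + j == k)%N then (-1) ^+ j * 'C(k, i)%:R else 0.

(* E(W) = Hom(W, W((x))) : a n = coefficient of x^n (an endomorphism). *)
Definition isE (K : fieldType) (W : lmodType K) (a : int -> {linear W -> W}) : Prop :=
  forall w : W, exists N : int, forall n, n < N -> a n w = 0.

(* a_1(x_1) ... a_r(x_r) w, coefficient of x_1^(n 1) ... x_r^(n r)
   (indices are 0, ..., r-1 here) *)
Definition prodE (K : fieldType) (W : lmodType K) (r : nat)
    (a : 'I_r -> int -> {linear W -> W}) (w : W) (n : 'I_r -> int) : W :=
  foldr (fun i v => a i (n i) v) w (enum 'I_r).

Definition shiftn (r : nat) (n : 'I_r -> int) (i j : 'I_r) (a b : nat) : 'I_r -> int :=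
  fun k => n k - (if k == i then Posz a else 0) - (if k == j then Posz b else 0).

(* multiplication of an r-variable W-valued series by p(x_i, x_j) *)
Definition pact (K : fieldType) (W : lmodType K) (r : nat) (p : pser K)
    (i j : 'I_r) (F : ('I_r -> int) -> W) : ('I_r -> int) -> W :=
  fun n => \sum_(ab \in [set: nat * nat]) p ab.1 ab.2 *: F (shiftn n i j ab.1 ab.2).

Definition pairs (r : nat) : seq ('I_r * 'I_r) :=
  filter (fun ij : 'I_r * 'I_r => (ij.1 < ij.2)%N)
    (allpairs (fun i j : 'I_r => (i, j)) (enum 'I_r) (enum 'I_r)).

Definition pairs_act (K : fieldType) (W : lmodType K) (r : nat) (p : pser K)
    (F : ('I_r -> int) -> W) : ('I_r -> int) -> W :=
  foldr (fun ij G => pact p ij.1 ij.2 G) F (pairs r).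

(* membership in W((x_1, ..., x_r)) *)
Definition in_Laurent (W : Type) (z : W) (r : nat) (F : ('I_r -> int) -> W) : Prop :=
  exists N : int, forall n, (exists i, n i < N) -> F n = z.

(* prod_{i<j} p(x_i,x_j) a_1(x_1)...a_r(x_r) in Hom(W, W((x_1,...,x_r))) *)
Definition good_for (K : fieldType) (W : lmodType K) (r : nat) (p : pser K)
    (a : 'I_r -> int -> {linear W -> W}) : Prop :=
  forall w : W, in_Laurent 0 (pairs_act p (prodE a w)).

Definition compatible_seq (K : fieldType) (W : lmodType K) (r : nat)
    (a : 'I_r -> int -> {linear W -> W}) : Prop :=
  exists k : nat, good_for (xmy_pow K k) a.

Definition quasi_compatible_seq (K : fieldType) (W : lmodType K) (r : nat)
    (a : 'I_r -> int -> {linear W -> W}) : Prop :=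
  exists p : pser K, p <> (fun _ _ => 0) /\ good_for p a.

Definition phi_quasi_compatible_seq (K : fieldType) (W : lmodType K) (phi : zser K)
    (r : nat) (a : 'I_r -> int -> {linear W -> W}) : Prop :=
  exists p : pser K, subst_phi p phi <> (fun _ _ => 0) /\ good_for p a.

(* subsets of E(W): every finite sequence in them *)
Definition compatible_set (K : fieldType) (W : lmodType K)
    (S : (int -> {linear W -> W}) -> Prop) : Prop :=
  forall r (a : 'I_r -> int -> {linear W -> W}), (forall i, S (a i)) -> compatible_seq a.

Definition quasi_compatible_set (K : fieldType) (W : lmodType K)
    (S : (int -> {linear W -> W}) -> Prop) : Prop :=
  forall r (a : 'I_r -> int -> {linear W -> W}), (forall i, S (a i)) ->
    quasi_compatible_seq a.

Definition phi_quasi_compatible_set (K : fieldType) (W : lmodType K) (phi : zser K)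
    (S : (int -> {linear W -> W}) -> Prop) : Prop :=
  forall r (a : 'I_r -> int -> {linear W -> W}), (forall i, S (a i)) ->
    phi_quasi_compatible_seq phi a.

From mathcomp Require Import all_boot all_order all_algebra.
From mathcomp Require Import boolp classical_sets fsbigop reals complex zify.
Set Implicit Arguments. Unset Strict Implicit. Unset Printing Implicit Defensive.
Import Order.TTheory GRing.Theory Num.Theory.
Local Open Scope ring_scope.

(* Write phi = x + d.  As phi(x,0) = x and phi <> x, d has a leading term
   c x^N z^t with t > 0 and c <> 0.  Expanding p(x + d, x) = sum_j Q_j(x) d^j,
   where Q_j collects the coefficients of u^j in p(y + u, y), the power d^j has
   z-order at least j t.  Take s0 minimal with Q_s0 <> 0 and s1 the lowest total
   degree occurring in Q_s0: the coefficient of z^(s0 t) x^(s0 N + s1 - s0) in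
   p(phi(x,z), x) is then c^s0 times a nonzero coefficient of Q_s0.  So every
   nonzero p, in particular (x - y)^k, stays nonzero after substitution. *)

Lemma ex_minn_prop (P : nat -> Prop) :
  (exists n, P n) -> exists2 n, P n & forall m, P m -> (n <= m)%N.
Proof.
move=> [n Pn]; have exPb : exists n, `[< P n >] by exists n; apply/asboolP.
by case: (ex_minnP exPb) => m /asboolP Pm mmin; exists m => // k /asboolP /mmin.
Qed.

Lemma ex_minz_prop (P : int -> Prop) (N0 : int) :
  (forall m, P m -> N0 <= m) -> (exists m, P m) ->
  exists2 m, P m & forall m', P m' -> m <= m'.
Proof.
move=> P_ge [m Pm].
have [|k Pk kmin] := @ex_minn_prop (fun k => P (N0 + k%:Z)).
  by exists `|m - N0|%N; have := P_ge m Pm => ?; have -> : N0 + `|m - N0|%N = m by lia.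
exists (N0 + k%:Z) => // m' Pm'; have := P_ge m' Pm' => ?.
have := kmin `|m' - N0|%N; have -> : N0 + `|m' - N0|%N = m' by lia.
by move=> /(_ Pm'); lia.
Qed.

Lemma binZ_nat (F : numFieldType) (n j : nat) : binZ F n j = 'C(n, j)%:R.
Proof.
have prod_ffact : \prod_(l < j) (n%:~R - l%:R : F) = (n ^_ j)%:R.
  elim: j => [|j IH]; first by rewrite big_ord0 ffactn0.
  rewrite big_ord_recr /= IH ffactnSr natrM.
  by case: (leqP j n) => jn; [rewrite natrB | rewrite ffact_small // !mul0r].
rewrite /binZ prod_ffact -bin_ffact natrM mulfK //.
by rewrite pnatr_eq0 -lt0n fact_gt0.
Qed.

Section DiagonalSums.
Variables (V : zmodType) (K : nat) (f : nat -> nat -> V).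
Hypothesis f_eq0 : forall i j, (K <= i + j)%N -> f i j = 0.

Lemma sum_square_diag :
  \sum_(0 <= i < K) \sum_(0 <= j < K) f i j =
  \sum_(0 <= s < K) \sum_(0 <= i < s.+1) f i (s - i)%N.
Proof.
transitivity (\sum_(0 <= s < K) \sum_(0 <= i < K | (i <= s)%N) f i (s - i)%N).
  under [RHS]eq_bigr do rewrite big_mkcond.
  rewrite [RHS]exchange_big_nat /=; apply: eq_big_nat => i /andP[_ hi].
  have -> : \sum_(0 <= s < K) (if (i <= s)%N then f i (s - i)%N else 0)
          = \sum_(0 + i <= s < K) f i (s - i)%N.
    rewrite add0n (@big_cat_nat _ _ _ i 0 K _ _ (leq0n i) (ltnW hi)) /= big1_seq.
      by rewrite add0r; apply: eq_big_nat => s /andP[-> _].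
    by move=> s /andP[_]; rewrite mem_index_iota => /andP[_ si]; rewrite leqNgt si.
  rewrite big_addn (big_nat_widen 0 (K - i) K) ?leq_subr //.
  rewrite [LHS]big_mkcond [RHS]big_mkcond /=; apply: eq_big_nat => j /andP[_ hj].
  by rewrite addnK; case: ifP => // hj2; rewrite f_eq0 //; lia.
apply: eq_big_nat => s /andP[_ hs].
by rewrite [RHS](big_nat_widen 0 s.+1 K).
Qed.

Lemma fsbig_nat2_diag :
  \sum_(ij \in [set: nat * nat]) f ij.1 ij.2 = \sum_(s < K) \sum_(i < s.+1) f i (s - i)%N.
Proof.
set r := [seq (i, j) | i <- index_iota 0 K, j <- index_iota 0 K].
rewrite -(fsbig_widen [set` r] setT) //; last first.
  move=> [i j] [_ /= ij_r]; apply: f_eq0; rewrite leqNgt; apply/negP => ijK.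
  by apply: ij_r; apply: allpairs_f; rewrite mem_index_iota; lia.
rewrite -fsbig_seq; last first.
  by apply: allpairs_uniq; rewrite ?iota_uniq // => -[a b] [a' b'] _ _ /= ->.
rewrite big_allpairs sum_square_diag big_mkord.
by apply: eq_bigr => s _; rewrite big_mkord.
Qed.

End DiagonalSums.

Section ZSeries.
Variable F : fieldType.
Implicit Types (f g d phi : zser F) (p : pser F).

Definition rows_bounded f := forall k, exists N : int, forall m, m < N -> f k m = 0.

Definition lower_bounded f :=
  forall K : nat, exists B : int, forall k m, (k <= K)%N -> m < B -> f k m = 0.

Definition zdev phi : zser F := fun k m => phi k m - xser F k m.

Lemma znpowS f j : znpow f j.+1 = zmul f (znpow f j).
Proof. by []. Qed.

Lemma rows_lower_bounded f : rows_bounded f -> lower_bounded f.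
Proof.
move=> f_rows; elim=> [|K [B HB]].
  by have [N HN] := f_rows 0%N; exists N => k m; rewrite leqn0 => /eqP ->; apply: HN.
have [N HN] := f_rows K.+1; exists (Order.min B N) => k m; rewrite lt_min.
by rewrite leq_eqVlt => /orP[/eqP -> | ?] /andP[? ?]; [apply: HN | apply: HB].
Qed.

Lemma lower_bounded_rows f : lower_bounded f -> rows_bounded f.
Proof. by move=> f_lb k; have [B HB] := f_lb k; exists B => m; apply: HB. Qed.

Lemma zone_lower_bounded : lower_bounded (zone F).
Proof.
by move=> K; exists 0 => k m _ m_lt0; rewrite /zone (_ : m == 0 = false) ?andbF //; lia.
Qed.

Lemma zmul_lower_bounded f g : lower_bounded f -> lower_bounded g -> lower_bounded (zmul f g).
Proof.
move=> f_lb g_lb K; have [Bf HBf] := f_lb K; have [Bg HBg] := g_lb K.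
exists (Bf + Bg) => k m kK mB; apply: big1 => i _; apply: fsbig1 => l _.
have iK : (i <= K)%N by apply: leq_trans kK; rewrite -ltnS ltn_ord.
case: (ltP l Bf) => lB; first by rewrite HBf // mul0r.
by rewrite HBg ?mulr0 //; [apply: leq_trans (leq_subr _ _) kK | lia].
Qed.

Lemma znpow_lower_bounded f j : lower_bounded f -> lower_bounded (znpow f j).
Proof.
move=> f_lb; elim: j => [|j IH]; first exact: zone_lower_bounded.
by rewrite znpowS; apply: zmul_lower_bounded.
Qed.

Lemma zdev_lower_bounded phi : rows_bounded phi -> lower_bounded (zdev phi).
Proof.
move=> phi_rows; apply: rows_lower_bounded => k; have [N HN] := phi_rows k.
exists (Order.min N 0) => m; rewrite lt_min => /andP[mN m_lt0].
by rewrite /zdev HN // /xser (_ : m == 1 = false) ?andbF ?subr0 //; lia.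
Qed.

Lemma lower_bounded_uniform (G : nat -> zser F) (k J : nat) :
  (forall j, lower_bounded (G j)) ->
  exists B : int, forall j m, (j <= J)%N -> m < B -> G j k m = 0.
Proof.
move=> G_lb; elim: J => [|J [B HB]].
  by have [B HB] := G_lb 0%N k; exists B => j m; rewrite leqn0 => /eqP ->; apply: HB.
have [B' HB'] := G_lb J.+1 k; exists (Order.min B B') => j m; rewrite lt_min.
by rewrite leq_eqVlt => /orP[/eqP -> | ?] /andP[? ?]; [apply: HB' | apply: HB].
Qed.

Lemma zser_leading f : rows_bounded f -> f <> (fun _ _ => 0) ->
  exists t N, [/\ forall k m, (k < t)%N -> f k m = 0,
                  forall m, m < N -> f t m = 0 & f t N != 0].
Proof.
move=> f_rows f_neq0.
have [|t [m0 ftm0] tmin] := @ex_minn_prop (fun k => exists m, f k m <> 0).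
  apply: contra_notP f_neq0 => f0; apply/funext => k; apply/funext => m.
  by apply: contra_notP f0 => ?; exists k, m.
have [Nt ft_low] := f_rows t.
have ft_ge m : f t m <> 0 -> Nt <= m.
  by move=> ftm; rewrite leNgt; apply/negP => /ft_low.
have [N ftN Nmin] := ex_minz_prop ft_ge (ex_intro _ m0 ftm0).
exists t, N; split; last exact/eqP.
- by move=> k m; apply: contraTeq => /eqP fkm; rewrite -leqNgt; apply: tmin; exists m.
- by move=> m; apply: contraTeq => /eqP ftm; rewrite -leNgt; apply: Nmin.
Qed.

Section LeadingPower.
Variables (d : zser F) (t : nat) (N : int).
Hypothesis d_below_t : forall k m, (k < t)%N -> d k m = 0.
Hypothesis dt_below_N : forall m, m < N -> d t m = 0.

Lemma znpow_below j n m : (n < j * t)%N -> znpow d j n m = 0.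
Proof.
elim: j n m => [|j IH] n m //; rewrite mulSn znpowS => n_lt.
apply: big1 => i _; apply: fsbig1 => l _.
case: (ltnP i t) => it; first by rewrite d_below_t // mul0r.
by rewrite IH ?mulr0 //; have := ltn_ord i; lia.
Qed.

Lemma znpow_lead_rowS j m : znpow d j.+1 (j.+1 * t)%N m =
  \sum_(l \in [set: int]) d t l * znpow d j (j * t)%N (m - l).
Proof.
have tS : (t < (j.+1 * t).+1)%N by rewrite ltnS mulSn leq_addr.
rewrite znpowS {1}/zmul (bigD1 (Ordinal tS)) //= [X in _ + X]big1 ?addr0.
  by rewrite (_ : j.+1 * t - t = j * t)%N // mulSn addKn.
move=> i; rewrite -val_eqE /= => i_neq; apply: fsbig1 => l _.
case: (ltnP i t) => it; first by rewrite d_below_t // mul0r.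
rewrite znpow_below ?mulr0 //; move: (ltn_ord i) i_neq it; move: (nat_of_ord i) => i'.
by rewrite mulSn; lia.
Qed.

Lemma znpow_lead_below j m : m < j%:Z * N -> znpow d j (j * t)%N m = 0.
Proof.
elim: j m => [|j IH] m m_lt.
  by rewrite /znpow /= /zone (_ : m == 0 = false) ?andbF //; lia.
rewrite znpow_lead_rowS; apply: fsbig1 => l _.
case: (ltP l N) => lN; first by rewrite dt_below_N // mul0r.
by rewrite IH ?mulr0 //; lia.
Qed.

Lemma znpow_lead j : znpow d j (j * t)%N (j%:Z * N) = d t N ^+ j.
Proof.
elim: j => [|j IH]; first by rewrite /znpow /= /zone mul0r.
rewrite znpow_lead_rowS -(fsbig_widen [set N]) //.
  by rewrite fsbig_set1 (_ : _ - N = j%:Z * N) ?IH ?exprS //; lia.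
move=> l [_ /= l_neq]; case: (ltgtP l N) => lN; last by [].
  by rewrite dt_below_N // mul0r.
by rewrite znpow_lead_below ?mulr0 //; lia.
Qed.

End LeadingPower.

(* The coefficient of [u^j y^(s - j)] in [p(y + u, y)]. *)
Definition shift_coef p (j s : nat) : F :=
  \sum_(i < s.+1) p i (s - i)%N * 'C(i, j)%:R.

Lemma shift_coef_neq0 p : p <> (fun _ _ => 0) -> exists j s, shift_coef p j s <> 0.
Proof.
move=> p_neq0; apply: contra_notP p_neq0 => Q_eq0.
have {}Q_eq0 j s : shift_coef p j s = 0.
  by apply: contra_notP Q_eq0 => ?; exists j, s.
suff p_eq0 s e : (e <= s)%N -> p (s - e)%N e = 0.
  apply/funext => i; apply/funext => j.
  by have := p_eq0 (i + j)%N j; rewrite addnK leq_addl => ->.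
elim/ltn_ind: e => e IH es.
have si : (s - e < s.+1)%N by rewrite ltnS leq_subr.
have := Q_eq0 (s - e)%N s; rewrite /shift_coef (bigD1 (Ordinal si)) //= big1 ?addr0.
  by rewrite subKn // binn mulr1.
move=> k; rewrite -val_eqE /= => k_neq.
case: (ltnP k (s - e)) => k_lt; first by rewrite bin_small // mulr0.
have ks : (k <= s)%N by rewrite -ltnS.
have ske : (s - k < e)%N by move: k_neq k_lt ks; move: (nat_of_ord k) => k'; lia.
by have := IH _ ske (leq_subr _ _); rewrite subKn // => ->; rewrite mul0r.
Qed.

End ZSeries.

Section Substitution.
Variables (F : numFieldType) (phi : zser F) (p : pser F).
Hypothesis phi_rows : rows_bounded phi.

Lemma zpow_shift_coef s n M :
  \sum_(i < s.+1) p i (s - i)%N * zpow phi i n (M - (s - i)%N%:Z) =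
  \sum_(j < n.+1) shift_coef p j s * znpow (zdev phi) j n (M - s%:Z + j%:Z).
Proof.
transitivity (\sum_(i < s.+1) \sum_(j < n.+1)
  p i (s - i)%N * 'C(i, j)%:R * znpow (zdev phi) j n (M - s%:Z + j%:Z)).
  apply: eq_bigr => i _; rewrite /zpow mulr_sumr; apply: eq_bigr => j _.
  by rewrite binZ_nat mulrA; congr (_ * znpow _ _ _ _); have := ltn_ord i; lia.
by rewrite exchange_big; apply: eq_bigr => j _; rewrite /shift_coef mulr_suml.
Qed.

Lemma subst_phi_shift_coef n M : exists K0, forall K, (K0 <= K)%N ->
  subst_phi p phi n M =
  \sum_(s < K) \sum_(j < n.+1) shift_coef p j s * znpow (zdev phi) j n (M - s%:Z + j%:Z).
Proof.
have dev_lb j := znpow_lower_bounded j (zdev_lower_bounded phi_rows).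
have [B HB] := lower_bounded_uniform n n dev_lb.
exists (absz (M + n%:Z - B)%R).+1 => K K0K.
rewrite /subst_phi (@fsbig_nat2_diag _ K (fun i j : nat => p i j * zpow phi i n (M - j%:Z))).
  by apply: eq_bigr => s _; apply: zpow_shift_coef.
move=> i j ijK; rewrite /zpow big1 ?mulr0 // => j' _.
by rewrite HB ?mulr0 //; move: (ltn_ord j'); lia.
Qed.

End Substitution.

Lemma subst_phi_neq0 (F : numFieldType) (phi : zser F) (p : pser F) :
  rows_bounded phi -> (forall m, phi 0%N m = (m == 1)%:R) -> phi <> xser F ->
  p <> (fun _ _ => 0) -> subst_phi p phi <> (fun _ _ => 0).
Proof.
move=> phi_rows phi0 phi_neq p_neq0.
set d := zdev phi.
have d_rows : rows_bounded d := lower_bounded_rows (zdev_lower_bounded phi_rows).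
have d_neq0 : d <> (fun _ _ => 0).
  move=> d0; apply: phi_neq; apply/funext => k; apply/funext => m.
  by apply/eqP; rewrite -subr_eq0; apply/eqP; exact: (congr1 (fun f => f k m) d0).
have [t [N [d_below_t dt_below_N dtN]]] := zser_leading d_rows d_neq0.
have t_gt0 : (0 < t)%N.
  rewrite lt0n; apply/eqP => t0.
  by move: dtN; rewrite t0 /d /zdev phi0 /xser /= subrr eqxx.
have [s0 [s1' Qs1'] s0_min] := ex_minn_prop (shift_coef_neq0 p_neq0).
have [s1 Qs1 s1_min] :=
  @ex_minn_prop (fun s => shift_coef p s0 s <> 0) (ex_intro _ s1' Qs1').
set M := s0%:Z * N + s1%:Z - s0%:Z.
have term_eq0 (s j : nat) : (s != s1) || (j != s0) ->
    shift_coef p j s * znpow d j (s0 * t)%N (M - s%:Z + j%:Z) = 0.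
  case: (ltngtP j s0) => [j_lt | j_gt | ->] sj_neq.
  - have -> : shift_coef p j s = 0.
      by apply: contraTeq j_lt => /eqP Qjs; rewrite -leqNgt; apply: s0_min; exists s.
    by rewrite mul0r.
  - by rewrite (znpow_below d_below_t) ?mulr0 // ltn_pmul2r.
  case: (ltngtP s s1) => [s_lt | s_gt | s_eq]; last by rewrite s_eq !eqxx in sj_neq.
  - have -> : shift_coef p s0 s = 0.
      by apply: contraTeq s_lt => /eqP Qs; rewrite -leqNgt; apply: s1_min.
    by rewrite mul0r.
  - by rewrite (znpow_lead_below d_below_t dt_below_N) ?mulr0 // /M; lia.
have [K0 coefE] := subst_phi_shift_coef p phi_rows (s0 * t)%N M.
have s1K : (s1 < maxn K0 s1.+1)%N by rewrite leq_max ltnSn orbT.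
have s0n : (s0 < (s0 * t).+1)%N by rewrite ltnS leq_pmulr.
move=> /(congr1 (fun f => f (s0 * t)%N M)) /=.
rewrite (coefE _ (leq_maxl K0 s1.+1)) (bigD1 (Ordinal s1K)) //=.
rewrite [X in _ + X]big1 ?addr0; last first.
  move=> s; rewrite -val_eqE /= => s_neq; apply: big1 => j _.
  by apply: term_eq0; rewrite s_neq.
rewrite (bigD1 (Ordinal s0n)) //= [X in _ + X]big1 ?addr0; last first.
  move=> j; rewrite -val_eqE /= => j_neq.
  by apply: term_eq0; rewrite j_neq orbT.
rewrite (_ : M - s1%:Z + s0%:Z = s0%:Z * N); last by rewrite /M; lia.
rewrite (znpow_lead d_below_t dt_below_N).
by apply/eqP; rewrite mulf_neq0 ?expf_neq0 //; apply/eqP.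
Qed.

Lemma xmy_pow_neq0 (F : fieldType) (k : nat) : xmy_pow F k <> (fun _ _ => 0).
Proof.
move=> /(congr1 (fun p => p k 0%N)) /=.
by rewrite /xmy_pow addn0 eqxx expr0 mul1r binn => /eqP; rewrite oner_eq0.
Qed.

Theorem lemma4p4 (R : realType) (W : lmodType R[i]) (phi : zser R[i]) :
  is_associate phi -> phi <> xser R[i] ->
  (forall S : (int -> {linear W -> W}) -> Prop,
      (forall a, S a -> isE a) -> compatible_set S -> phi_quasi_compatible_set phi S) /\
  (forall S : (int -> {linear W -> W}) -> Prop,
      (forall a, S a -> isE a) -> quasi_compatible_set S -> phi_quasi_compatible_set phi S).
Proof.
move=> [phi_rows phi0 _] phi_neq; split=> S _ S_compat r a Sa.
- have [k good] := S_compat r a Sa; exists (xmy_pow _ k); split=> //.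
  exact: subst_phi_neq0 phi_rows phi0 phi_neq (@xmy_pow_neq0 _ k).
- have [p [p_neq0 good]] := S_compat r a Sa; exists p; split=> //.
  exact: subst_phi_neq0 phi_rows phi0 phi_neq p_neq0.
Qed.
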